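(* Let $D=(V,E;s,t)$, $N$ be as in the context with $\sigma_N\ge2$. In the sequential linear programs for the nucleon of $\widetilde\Gamma_D$, one has $\epsilon_1=0$ and $\widetilde X_1=\mathcal{C}(\widetilde\Gamma_D)$.
   Context: $D=(V,E;s,t)$ is a directed network with unit arc capacities (parallel arcs allowed); $N\subseteq E$ is the set of private arcs (players), $M=E\setminus N$ public arcs; every $s$-$t$ path contains an arc of $N$ and every arc lies on some $s$-$t$ path. $\sigma_N$ is the maximum number of $s$-$t$ paths pairwise sharing no arc of $N$. For $S\subseteq N$, $\gamma(S)$ is the maximum number of pairwise arc-disjoint $s$-$t$ paths in $D_S=(V,S\cup M;s,t)$. Auxiliary game $\widetilde\Gamma_D=(N,\tilde\gamma)$: $\tilde\gamma(N)=\sigma_N$, $\tilde\gamma(S)=\gamma(S)$ for $S\subsetneq N$; $\chi(\widetilde\Gamma_D)=\{x\in\mathbb{R}^N_{\ge0}:x(N)=\sigma_N\}$, $x(S)=\sum_{i\in S}x_i$; core $\mathcal{C}(\widetilde\Gamma_D)=\{x\in\chi(\widetilde\Gamma_D):x(S)\ge\tilde\gamma(S)\ \forall S\}$. For $X\subseteq\mathbb{R}^N$, $\mathrm{fix}(X)=\{S\subseteq N: x(S) \text{ is the same for all } x\in X\}$. Sequential LPs: $\widetilde X_0=\chi(\widetilde\Gamma_D)$, $\mathrm{fix}(\widetilde X_0)=\{\emptyset,N\}$, $\epsilon_0=0$; for $k\ge0$, $\widetilde{LP}_{k+1}$ maximizes $\epsilon$ subject to $x(S)\ge(1+\epsilon)\tilde\gamma(S)$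 for all $S\in 2^N\setminus\mathrm{fix}(\widetilde X_k)$ and $x\in\widetilde X_k$; $\epsilon_{k+1}$ is its optimal value and $\widetilde X_{k+1}$ is the set of $x$ such that $(x,\epsilon_{k+1})$ is optimal. *)

From HB Require Import structures.
From mathcomp Require Import all_boot all_order all_algebra.
From mathcomp Require Import boolp reals.
Set Implicit Arguments.
Unset Strict Implicit.
Unset Printing Implicit Defensive.
Import Order.TTheory GRing.Theory Num.Theory.

(* Arcs form the finite type  E := N + M : private arcs (players) are the
   elements [inl e] (e : N), public arcs the elements [inr m] (m : M);
   parallel arcs are allowed since arcs are abstract, with tail [src] and
   head [dst]. *)
Section Network.
Variables (V N M : finType) (src dst : N + M -> V) (s t : V).

Local Notation arc := (N + M)%type.

Fixpoint walk_to (x : V) (p : seq arc) : bool :=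
  if p is a :: p' then (src a == x) && walk_to (dst a) p' else x == t.

Definition stpath (p : seq arc) : bool :=
  walk_to s p && uniq (s :: map dst p).

(* arcs available in D_S = (V, S \cup M; s, t) *)
Definition usable (S : {set N}) (a : arc) : bool :=
  match a with inl e => e \in S | inr _ => true end.

Definition N_disjoint_family (k : nat) : Prop :=
  exists P : 'I_k -> seq arc,
    (forall i, stpath (P i)) /\
    (forall i j, i != j -> forall e : N, inl e \in P i -> inl e \notin P j).

Definition arc_disjoint_family (S : {set N}) (k : nat) : Prop :=
  exists P : 'I_k -> seq arc,
    (forall i, stpath (P i) /\ all (usable S) (P i)) /\
    (forall i j, i != j -> forall a : arc, a \in P i -> a \notin P j).

(* maxima; the bound #|arc| is harmless under the standing assumptions
   (paths are nonempty and every path has an arc of N) *)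
Definition sigmaN : nat :=
  \max_(k < #|{: arc}|.+1 | `[< N_disjoint_family k >]) k.

Definition gamma (S : {set N}) : nat :=
  \max_(k < #|{: arc}|.+1 | `[< arc_disjoint_family S k >]) k.

Definition gammat (S : {set N}) : nat :=
  if S == [set: N] then sigmaN else gamma S.

Variable R : realType.
Local Open Scope ring_scope.

Definition xsum (x : N -> R) (S : {set N}) : R := \sum_(i in S) x i.

Definition chi (x : N -> R) : Prop :=
  (forall i, 0 <= x i) /\ xsum x [set: N] = sigmaN%:R.

Definition core (x : N -> R) : Prop :=
  chi x /\ forall S : {set N}, (gammat S)%:R <= xsum x S.

Definition fixed (X : (N -> R) -> Prop) (S : {set N}) : Prop :=
  forall x y, X x -> X y -> xsum x S = xsum y S.

(* feasibility of (x, eps) for the LP following X (i.e. LP_{k+1} for X = X_k) *)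
Definition LPfeas (X : (N -> R) -> Prop) (x : N -> R) (eps : R) : Prop :=
  X x /\ forall S : {set N}, ~ fixed X S -> (1 + eps) * (gammat S)%:R <= xsum x S.

Definition LPopt (X : (N -> R) -> Prop) (eps : R) : Prop :=
  (exists x, LPfeas X x eps) /\ forall x e, LPfeas X x e -> e <= eps.

Definition LPnext (X : (N -> R) -> Prop) (eps : R) : (N -> R) -> Prop :=
  fun x => LPfeas X x eps.

End Network.

(* Menger's theorem for private arcs: a maximum integral flow, with capacity 1
   on private arcs and none on public arcs, yields a set C of private arcs met
   by every s-t path together with |C| s-t paths pairwise sharing no private
   arc.  Hence sigma_N = |C| and gamma(S) <= |C :&: S|, so the indicator vector
   of C lies in the core; as the core is nonempty, (x, 0) is feasible for LP_1
   exactly when x is in the core.  If (x, eps) were feasible with eps > 0, the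
   private arc sets A_1, ..., A_k of k = sigma_N >= 2 such paths would be
   non-fixed coalitions with gamma(A_i) >= 1, whence
   sigma_N = x(N) >= x(A_1) + ... + x(A_k) >= k (1 + eps) > sigma_N. *)

From HB Require Import structures.
From mathcomp Require Import all_boot all_order all_algebra zify lra.
From mathcomp Require Import boolp reals.
Import Order.TTheory GRing.Theory Num.Theory.
Set Implicit Arguments.
Unset Strict Implicit.
Unset Printing Implicit Defensive.

Section PrivateMenger.
Variables (V N M : finType) (src dst : N + M -> V) (s t : V).
Local Notation arc := (N + M)%type.
Local Open Scope ring_scope.

Definition b2i (b : bool) : int := (b : nat)%:Z.

Lemma b2i_false : b2i false = 0. Proof. by []. Qed.
Lemma b2i_true : b2i true = 1. Proof. by []. Qed.

Definition net_out (f : arc -> int) (v : V) : int :=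
  \sum_a (b2i (src a == v) - b2i (dst a == v)) * f a.

Lemma net_outD f g v : net_out (fun a => f a + g a) v = net_out f v + net_out g v.
Proof. by rewrite /net_out -big_split; apply: eq_bigr => a _; rewrite mulrDr. Qed.

Lemma net_outB f g v : net_out (fun a => f a - g a) v = net_out f v - net_out g v.
Proof. by rewrite /net_out -sumrB; apply: eq_bigr => a _; rewrite mulrBr. Qed.

Lemma sum_b2i_eq (A : {set V}) u : \sum_(v in A) b2i (u == v) = b2i (u \in A).
Proof.
case: (boolP (u \in A)) => uA; last first.
  by rewrite big1 // => v vA; case: eqP => // uv; rewrite uv vA in uA.
rewrite (bigD1 u) //= eqxx big1 ?addr0 // => v /andP[_ /negbTE].
by rewrite eq_sym => ->.
Qed.

Lemma sum_net_out (A : {set V}) f :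
  \sum_(v in A) net_out f v = \sum_a (b2i (src a \in A) - b2i (dst a \in A)) * f a.
Proof.
rewrite /net_out exchange_big; apply: eq_bigr => a _.
by rewrite -mulr_suml sumrB !sum_b2i_eq.
Qed.

Definition is_flow (f : arc -> int) :=
  [/\ forall a, 0 <= f a, forall e, f (inl e) <= 1 &
      forall v, v != s -> v != t -> net_out f v = 0].

Lemma net_out_cut (A : {set V}) f : is_flow f -> s \in A -> t \notin A ->
  net_out f s = \sum_a (b2i (src a \in A) - b2i (dst a \in A)) * f a.
Proof.
case=> _ _ conserved sA tA; rewrite -sum_net_out (bigD1 s) //= big1 ?addr0 //.
move=> v /andP[vA vs]; apply: conserved => //.
by apply: contraNneq tA => <-.
Qed.

(* [(a, true)] traverses [a] forwards, [(a, false)] backwards. *)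
Definition dart := (arc * bool)%type.
Definition dtail (d : dart) := if d.2 then src d.1 else dst d.1.
Definition dhead (d : dart) := if d.2 then dst d.1 else src d.1.

Fixpoint dwalk (x : V) (ds : seq dart) : bool :=
  if ds is d :: ds' then (dtail d == x) && dwalk (dhead d) ds' else true.

Definition sgn (b : bool) : int := if b then 1 else -1.

Definition dart_flow (ds : seq dart) (a : arc) : int :=
  \sum_(d <- ds) b2i (d.1 == a) * sgn d.2.

Lemma net_out_dart_flow ds x v : dwalk x ds ->
  net_out (dart_flow ds) v = b2i (x == v) - b2i (last x (map dhead ds) == v).
Proof.
elim: ds x => [|d ds IH] x /=.
  by move=> _; rewrite /net_out big1 ?subrr // => a _; rewrite /dart_flow big_nil mulr0.
case/andP=> /eqP <- walk_ds.
have -> : dart_flow (d :: ds) = fun a => b2i (d.1 == a) * sgn d.2 + dart_flow ds a.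
  by apply/funext => a; rewrite /dart_flow big_cons.
rewrite net_outD (IH _ walk_ds) addrA; congr (_ - _).
rewrite /net_out (bigD1 d.1) //= big1 ?addr0; last first.
  by move=> a /negbTE; rewrite eq_sym => ->; rewrite mul0r mulr0.
rewrite eqxx mul1r /dtail /dhead; case: d.2 => /=; first by rewrite mulr1 subrK.
by rewrite mulrN1 opprB subrK.
Qed.

Lemma dart_flow_notin ds a : a \notin map fst ds -> dart_flow ds a = 0.
Proof.
move=> a_ds; rewrite /dart_flow big1_seq // => d /andP[_ d_ds].
case: eqP => [da|]; last by rewrite mul0r.
by rewrite -da (map_f fst d_ds) in a_ds.
Qed.

Lemma dart_flow_in ds d : uniq (map fst ds) -> d \in ds -> dart_flow ds d.1 = sgn d.2.
Proof.
rewrite /dart_flow; elim: ds => [|d' ds IH] //= /andP[d'_ds uniq_ds].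
rewrite big_cons inE => /orP[/eqP ->|d_ds].
  by rewrite -/(dart_flow ds _) dart_flow_notin // eqxx mul1r addr0.
rewrite IH //; case: eqP => [dd'|]; last by rewrite mul0r add0r.
by rewrite dd' (map_f fst d_ds) in d'_ds.
Qed.

Definition arc_rel (P : pred arc) : rel V :=
  fun u v => [exists a, [&& P a, src a == u & dst a == v]].

Lemma path_arc_rel (P : pred arc) x p : path (arc_rel P) x p ->
  exists q, [/\ map dst q = p, all P q & walk_to src dst (last x p) x q].
Proof.
elim: p x => [|v p IH] x /=; first by exists [::]; rewrite /= eqxx.
case/andP=> /existsP[a /and3P[Pa /eqP sa /eqP da]] /IH[q [dst_q Pq walk_q]].
by exists (a :: q); rewrite /= dst_q da Pa Pq sa eqxx.
Qed.

Lemma connect_stpath (P : pred arc) :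
  connect (arc_rel P) s t -> exists2 p, stpath src dst s t p & all P p.
Proof.
case/connectP=> p /shortenP[q path_q uniq_q _] -> {p}.
have [r [dst_r Pr walk_r]] := path_arc_rel path_q.
by exists r; rewrite // /stpath walk_r dst_r uniq_q.
Qed.

Lemma support_connect f : is_flow f -> 0 < net_out f s ->
  connect (arc_rel (fun a => 0 < f a)) s t.
Proof.
move=> flow_f out_pos; apply/negPn/negP => s_t.
pose A := [set v | connect (arc_rel (fun a => 0 < f a)) s v].
have sA : s \in A by rewrite inE connect0.
have tA : t \notin A by rewrite inE.
suff : net_out f s <= 0 by rewrite leNgt out_pos.
rewrite (net_out_cut flow_f sA tA); apply: sumr_le0 => a _.
have [f_ge0 _ _] := flow_f; have := f_ge0 a.
case: (boolP (src a \in A)) => srcA; case: (boolP (dst a \in A)) => dstA;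
  rewrite ?b2i_false ?b2i_true; try lia.
suff : ~~ (0 < f a) by lia.
apply: contra dstA => fa; rewrite inE in srcA; rewrite inE.
by apply: (connect_trans srcA); apply/connect1/existsP; exists a; rewrite fa !eqxx.
Qed.

Definition private_cut (C : {set N}) :=
  forall p, stpath src dst s t p -> exists2 e, e \in C & inl e \in p.

Definition private_disjoint k (P : 'I_k -> seq arc) :=
  forall i j, i != j -> forall e : N, inl e \in P i -> inl e \notin P j.

Lemma private_disjoint_extend k (P : 'I_k -> seq arc) p :
  private_disjoint P -> (forall j e, inl e \in p -> inl e \notin P j) ->
  private_disjoint (fun i : 'I_k.+1 => if unlift ord_max i is Some j then P j else p).
Proof.
move=> disj_P fresh_p i j.
case: unliftP => [i' ->|->]; case: unliftP => [j' ->|->] //; last by rewrite eqxx.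
- by move=> ij; apply: disj_P; apply: contraNneq ij => ->.
- by move=> _ e e_i'; apply: contraL e_i' => /(fresh_p i').
- by move=> _; apply: fresh_p.
Qed.

Lemma private_disjoint_le_cut (C S : {set N}) k (P : 'I_k -> seq arc) :
  private_cut C -> (forall i, stpath src dst s t (P i)) -> private_disjoint P ->
  (forall i e, inl e \in P i -> e \in S) -> (k <= #|C :&: S|)%N.
Proof.
move=> cut_C path_P disj_P P_S.
have /fin_all_exists[h hP] : forall i, exists e, (e \in C) && (inl e \in P i).
  by move=> i; have [e eC eP] := cut_C _ (path_P i); exists e; rewrite eC eP.
have inj_h : injective h.
  move=> i j hij; apply/eqP/negPn/negP => ij.
  have /andP[_ hi] := hP i; have /andP[_ hj] := hP j.
  by move: (disj_P i j ij _ hi); rewrite hij hj.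
rewrite -{1}[k]card_ord -(card_imset (mem 'I_k) inj_h).
apply/subset_leq_card/subsetP => _ /imsetP[i _ ->].
by have /andP[hC hi] := hP i; rewrite inE hC (P_S i _ hi).
Qed.

Definition fwd (a : arc) : dart := (a, true).

Lemma map_fst_fwd p : map fst (map fwd p) = p.
Proof. by elim: p => //= a p ->. Qed.

Lemma walk_dwalk y x p : walk_to src dst y x p ->
  dwalk x (map fwd p) && (last x (map dhead (map fwd p)) == y).
Proof.
elim: p x => [|a p IH] x //=.
by case/andP=> sx /IH/andP[-> ->]; rewrite /dtail /= sx.
Qed.

Lemma net_out_path p v : stpath src dst s t p ->
  net_out (fun a => b2i (a \in p)) v = b2i (s == v) - b2i (t == v).
Proof.
case/andP=> /walk_dwalk/andP[walk_p /eqP last_p] /= /andP[_ /map_uniq uniq_p].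
have -> : (fun a => b2i (a \in p)) = dart_flow (map fwd p).
  apply/funext => a; case: (boolP (a \in p)) => ap.
    by rewrite (dart_flow_in (d := fwd a)) ?map_fst_fwd ?map_f.
  by rewrite dart_flow_notin ?map_fst_fwd.
by rewrite (net_out_dart_flow _ walk_p) last_p.
Qed.

Section MaxFlowMinCut.
Hypothesis s_neq_t : s != t.
Hypothesis stpath_private : forall p, stpath src dst s t p -> exists e : N, inl e \in p.

Lemma flow_sub_path f p : is_flow f -> stpath src dst s t p ->
  all (fun a => 0 < f a) p ->
  exists g, [/\ is_flow g, net_out g s = net_out f s - 1,
    forall a, 0 < g a -> 0 < f a & forall e, inl e \in p -> g (inl e) = 0].
Proof.
move=> [f_ge0 f_le1 conserved] path_p /allP pos_p.
exists (fun a => f a - b2i (a \in p)); split.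
- split.
  + move=> a; have := f_ge0 a; case: (boolP (a \in p)) => [/pos_p /= fa|_];
      rewrite ?b2i_true ?b2i_false; lia.
  + by move=> e; have := f_le1 e; case: (inl e \in p); rewrite ?b2i_true ?b2i_false; lia.
  + move=> v vs vt; rewrite net_outB net_out_path // conserved //.
    by rewrite eq_sym (negbTE vs) eq_sym (negbTE vt) b2i_false subrr.
- rewrite net_outB net_out_path // eqxx eq_sym (negbTE s_neq_t).
  by rewrite b2i_true b2i_false subr0.
- by move=> a; case: (a \in p); rewrite ?b2i_true ?b2i_false; lia.
- by move=> e ep; rewrite ep b2i_true; have := f_le1 e; have /= := pos_p _ ep; lia.
Qed.

Lemma flow_decomposition k f : is_flow f -> net_out f s = k%:Z ->
  exists P : 'I_k -> seq arc, [/\ forall i, stpath src dst s t (P i),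
    private_disjoint P & forall i a, a \in P i -> 0 < f a].
Proof.
elim: k f => [|k IH] f flow_f out_f.
  by exists (fun _ => [::]); split=> -[].
have [p path_p pos_p] : exists2 p, stpath src dst s t p & all (fun a => 0 < f a) p.
  by apply/connect_stpath/support_connect; rewrite ?out_f.
have [g [flow_g out_g supp_g p_sat]] := flow_sub_path flow_f path_p pos_p.
have out_g' : net_out g s = k%:Z by rewrite out_g out_f -addn1 PoszD addrK.
have [P [path_P disj_P pos_P]] := IH _ flow_g out_g'.
exists (fun i => if unlift ord_max i is Some j then P j else p); split.
- by move=> i; case: unliftP.
- apply: private_disjoint_extend => // j e /p_sat g0.
  by apply/negP => /pos_P; rewrite g0 ltxx.
- by move=> i a; case: unliftP => [j _ /pos_P /supp_g|_ /(allP pos_p)].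
Qed.

Definition residual (f : arc -> int) (d : dart) : bool :=
  if d.2 then (if d.1 is inl _ then f d.1 < 1 else true) else 0 < f d.1.

Definition residual_rel f : rel V :=
  fun u v => [exists d, [&& residual f d, dtail d == u & dhead d == v]].

Lemma path_residual_rel f x p : path (residual_rel f) x p ->
  exists ds, [/\ dwalk x ds, map dhead ds = p & all (residual f) ds].
Proof.
elim: p x => [|v p IH] x /=; first by exists [::].
case/andP=> /existsP[d /and3P[res_d /eqP tail_d /eqP head_d]].
case/IH=> ds [walk_ds head_ds res_ds].
by exists (d :: ds); rewrite /= tail_d head_d eqxx walk_ds head_ds res_d res_ds.
Qed.

Lemma dwalk_uniq x ds : dwalk x ds -> uniq (x :: map dhead ds) -> uniq (map fst ds).
Proof.
elim: ds x => [|d ds IH] x //= /andP[/eqP tail_d walk_ds].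
rewrite inE negb_or => /andP[/andP[x_d x_ds] /andP[d_ds uniq_ds]].
rewrite (IH (dhead d)) /= ?d_ds // andbT; apply/mapP => -[d' d'_ds d'd].
have /orP[/eqP|/eqP] : (dhead d' == x) || (dhead d' == dhead d).
  by rewrite -tail_d /dtail /dhead d'd; case: d.2; case: d'.2; rewrite !eqxx ?orbT.
- by move=> hx; rewrite -hx map_f in x_ds.
- by move=> hd; rewrite -hd map_f in d_ds.
Qed.

Lemma augment f : is_flow f -> connect (residual_rel f) s t ->
  exists2 g, is_flow g & net_out g s = net_out f s + 1.
Proof.
move=> [f_ge0 f_le1 conserved] /connectP[p path_p].
case/shortenP: path_p => q path_q uniq_q _ last_q.
have [ds [walk_ds head_ds res_ds]] := path_residual_rel path_q.
have uniq_ds : uniq (map fst ds) by apply: (dwalk_uniq walk_ds); rewrite head_ds.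
have last_ds : last s (map dhead ds) = t by rewrite head_ds.
have dart_flowP a : dart_flow ds a = 0 \/
    exists2 d, d \in ds & a = d.1 /\ dart_flow ds a = sgn d.2.
  case: (boolP (a \in map fst ds)) => [/mapP[d d_ds ->]|a_ds].
    by right; exists d; last split; last exact: dart_flow_in.
  by left; apply: dart_flow_notin.
exists (fun a => f a + dart_flow ds a); last first.
  rewrite net_outD (net_out_dart_flow _ walk_ds) last_ds eqxx eq_sym (negbTE s_neq_t).
  by rewrite b2i_true b2i_false subr0.
split.
- move=> a; have := f_ge0 a; case: (dart_flowP a) => [->|[d d_ds [-> ->]]]; first lia.
  by have := allP res_ds d d_ds; rewrite /residual /sgn; case: d.2 => //=; lia.
- move=> e; have := f_le1 e; case: (dart_flowP (inl e)) => [->|[d d_ds [ed ->]]]; first lia.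
  by have := allP res_ds d d_ds; rewrite /residual /sgn -ed; case: d.2 => /=; lia.
- move=> v vs vt; rewrite net_outD (net_out_dart_flow _ walk_ds) last_ds conserved //.
  by rewrite eq_sym (negbTE vs) eq_sym (negbTE vt) b2i_false subrr.
Qed.

Lemma walk_leaves (A : {set V}) y x p : walk_to src dst y x p -> x \in A -> y \notin A ->
  exists2 a, a \in p & (src a \in A) && (dst a \notin A).
Proof.
elim: p x => [|a p IH] x /=; first by move=> /eqP -> ->.
case/andP=> /eqP src_a walk_p xA yA; case: (boolP (dst a \in A)) => dstA.
  by have [b bp leave_b] := IH _ walk_p dstA yA; exists b; rewrite // inE bp orbT.
by exists a; rewrite ?inE ?eqxx // src_a xA.
Qed.

Lemma sum_b2i_card (C : {set N}) : \sum_(e : N) b2i (e \in C) = #|C|%:Z.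
Proof.
rewrite -sum1_card (big_mkcond (fun e => e \in C)) /=.
rewrite (big_morph Posz PoszD (erefl 0%:Z)).
by apply: eq_bigr => e _; case: (e \in C).
Qed.

(* Without augmenting path, the arcs leaving the residual-reachable set [A] are
   saturated private arcs and the arcs entering [A] carry no flow. *)
Lemma residual_cut f : is_flow f -> ~~ connect (residual_rel f) s t ->
  exists C, private_cut C /\ net_out f s = #|C|%:Z.
Proof.
move=> flow_f no_aug; have [f_ge0 f_le1 _] := flow_f.
pose A := [set v | connect (residual_rel f) s v].
have sA : s \in A by rewrite inE connect0.
have tA : t \notin A by rewrite inE.
have reach d : residual f d -> dtail d \in A -> dhead d \in A.
  move=> res_d; rewrite !inE => s_tail; apply: (connect_trans s_tail).
  by apply/connect1/existsP; exists d; rewrite res_d !eqxx.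
have leave a : src a \in A -> dst a \notin A -> exists2 e, a = inl e & f a = 1.
  move=> srcA dstA; have : ~~ residual f (a, true).
    by apply: contra dstA => /reach; apply.
  rewrite /residual; case: a srcA dstA => [e|m] //= _ _ full; exists e => //.
  by have := f_le1 e; have := f_ge0 (inl e); lia.
have enter a : src a \notin A -> dst a \in A -> f a = 0.
  move=> srcA dstA; have : ~~ residual f (a, false).
    by apply: contra srcA => /reach; apply.
  by rewrite /residual /=; have := f_ge0 a; lia.
exists [set e | (src (inl e) \in A) && (dst (inl e) \notin A)]; split.
  move=> p /andP[walk_p _]; have [a ap /andP[srcA dstA]] := walk_leaves walk_p sA tA.
  by have [e ae _] := leave a srcA dstA; exists e; rewrite -?ae // inE -ae srcA dstA.
have net_arc a : (b2i (src a \in A) - b2i (dst a \in A)) * f a =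
    b2i ((src a \in A) && (dst a \notin A)).
  case: (boolP (src a \in A)) => srcA; case: (boolP (dst a \in A)) => dstA;
    rewrite ?b2i_true ?b2i_false ?subrr ?mul0r //=.
    by have [_ _ ->] := leave _ srcA dstA.
  by rewrite enter // mulr0.
rewrite (net_out_cut flow_f sA tA) (eq_bigr _ (fun a _ => net_arc a)) -sum_b2i_card.
rewrite big_sumType /= [X in _ + X]big1 ?addr0 => [|m _].
  by apply: eq_bigr => e _; rewrite inE.
by case: (boolP (_ && _)) => // /andP[srcA dstA]; have [] := leave _ srcA dstA.
Qed.

Lemma flow_value_le f k : is_flow f -> net_out f s = k%:Z -> (k <= #|N|)%N.
Proof.
move=> flow_f out_f; have [P [path_P disj_P _]] := flow_decomposition flow_f out_f.
have cut_N : private_cut setT.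
  by move=> p /stpath_private[e ep]; exists e; rewrite ?inE.
rewrite -cardsT -[setT]setIid.
by apply: (private_disjoint_le_cut cut_N path_P disj_P) => i e _; rewrite inE.
Qed.

Lemma max_flow : exists2 f, is_flow f & ~~ connect (residual_rel f) s t.
Proof.
pose value k := `[< exists2 f, is_flow f & net_out f s = k%:Z >].
have value0 : exists k, value k.
  exists 0%N; apply/asboolP; exists (fun=> 0).
    by split=> // v _ _; rewrite /net_out big1 // => a _; rewrite mulr0.
  by rewrite /net_out big1 // => a _; rewrite mulr0.
have value_le k : value k -> (k <= #|N|)%N.
  by case/asboolP=> f; apply: flow_value_le.
case: (ex_maxnP value0 value_le) => k /asboolP[f flow_f out_f] k_max.
exists f => //; apply/negP => /(augment flow_f)[g flow_g out_g].
suff /k_max : value k.+1 by rewrite ltnn.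
by apply/asboolP; exists g; rewrite // out_g out_f -addn1 PoszD.
Qed.

Lemma private_menger : exists2 C, private_cut C & N_disjoint_family src dst s t #|C|.
Proof.
have [f flow_f no_aug] := max_flow.
have [C [cut_C out_f]] := residual_cut flow_f no_aug.
have [P [path_P disj_P _]] := flow_decomposition flow_f out_f.
by exists C; last exists P.
Qed.

End MaxFlowMinCut.

End PrivateMenger.

Section AuxiliaryGame.
Variables (V N M : finType) (src dst : N + M -> V) (s t : V) (R : realType).
Local Notation arc := (N + M)%type.
Local Open Scope ring_scope.

Lemma stpath_private_neq :
  (forall p, stpath src dst s t p -> exists e : N, inl e \in p) -> s != t.
Proof.
move=> priv; apply/eqP => st; have [|e] := priv [::]; last by rewrite in_nil.
by rewrite /stpath /= st eqxx.
Qed.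

Lemma leq_sigmaN k : N_disjoint_family src dst s t k -> (k <= #|{: arc}|)%N ->
  (k <= sigmaN src dst s t)%N.
Proof.
move=> fam k_le; have k_lt : (k < #|{: arc}|.+1)%N by [].
exact: (leq_bigmax_cond (Ordinal k_lt) (asboolT fam)).
Qed.

Lemma leq_gamma S k : arc_disjoint_family src dst s t S k -> (k <= #|{: arc}|)%N ->
  (k <= gamma src dst s t S)%N.
Proof.
move=> fam k_le; have k_lt : (k < #|{: arc}|.+1)%N by [].
exact: (leq_bigmax_cond (Ordinal k_lt) (asboolT fam)).
Qed.

Lemma sigmaN_le_cut C : private_cut src dst s t C -> (sigmaN src dst s t <= #|C|)%N.
Proof.
move=> cut_C; apply/bigmax_leqP => k /asboolP[P [path_P disj_P]] /=.
rewrite -[C]setIT.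
by apply: (private_disjoint_le_cut cut_C path_P disj_P) => i e _; rewrite inE.
Qed.

Lemma gamma_le_cut C S : private_cut src dst s t C ->
  (gamma src dst s t S <= #|C :&: S|)%N.
Proof.
move=> cut_C; apply/bigmax_leqP => k /asboolP[P [path_P disj_P]] /=.
apply: (private_disjoint_le_cut cut_C (P := P)).
- by move=> i; case: (path_P i).
- by move=> i j ij e; apply: disj_P.
- by move=> i e e_i; case: (path_P i) => _ /allP/(_ _ e_i).
Qed.

Section CutIndicator.
Variable C : {set N}.
Hypotheses (cut_C : private_cut src dst s t C)
  (paths_C : N_disjoint_family src dst s t #|C|).

Lemma sigmaN_cut : sigmaN src dst s t = #|C|.
Proof.
apply/eqP; rewrite eqn_leq sigmaN_le_cut // leq_sigmaN //.
by rewrite card_sum (leq_trans (max_card _)) ?leq_addr.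
Qed.

Lemma gammat_le_cut S : (gammat src dst s t S <= #|C :&: S|)%N.
Proof.
rewrite /gammat; case: eqP => [->|_]; last exact: gamma_le_cut.
by rewrite setIT sigmaN_cut.
Qed.

Definition indicator : N -> R := fun e => (e \in C)%:R.

Lemma xsum_indicator S : xsum indicator S = #|C :&: S|%:R.
Proof.
rewrite /xsum -natr_sum -sum1_card; congr _%:R.
rewrite big_mkcond [RHS]big_mkcond /=.
by apply: eq_bigr => e _; rewrite inE; case: (e \in C); case: (e \in S).
Qed.

Lemma indicator_core : core src dst s t indicator.
Proof.
split; last by move=> S; rewrite xsum_indicator ler_nat gammat_le_cut.
by split=> [e|]; rewrite ?ler0n // xsum_indicator setIT sigmaN_cut.
Qed.

End CutIndicator.

Lemma chi_not_fixed (S : {set N}) e1 e2 :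
  e1 \in S -> e2 \notin S -> (0 < sigmaN src dst s t)%N ->
  ~ fixed (chi src dst s t (R:=R)) S.
Proof.
move=> e1S e2S sigma_pos fixS.
pose x e0 : N -> R := fun e => if e == e0 then (sigmaN src dst s t)%:R else 0.
have x_sum e0 (T : {set N}) : e0 \in T -> xsum (x e0) T = (sigmaN src dst s t)%:R.
  move=> e0T; rewrite /xsum (bigD1 e0) //= /x eqxx big1 ?addr0 //.
  by move=> e /andP[_ /negbTE ->].
have x_chi e0 : chi src dst s t (x e0).
  by split; [move=> e; rewrite /x; case: ifP | rewrite x_sum].
have := fixS _ _ (x_chi e1) (x_chi e2); rewrite x_sum // /xsum big1.
  by move/eqP; rewrite pnatr_eq0 eqn0Ngt sigma_pos.
by move=> e eS; rewrite /x; case: eqP => // ee2; rewrite -ee2 eS in e2S.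
Qed.

Lemma sum_xsum_disjoint_le (I : finType) (x : N -> R) (A : I -> {set N}) :
  (forall e, 0 <= x e) -> (forall i j, i != j -> [disjoint A i & A j]) ->
  \sum_i xsum x (A i) <= xsum x [set: N].
Proof.
move=> x_ge0 A_disj; rewrite /xsum -partition_disjoint_bigcup //.
by rewrite [leRHS](big_setID (\bigcup_i A i)) setTI lerDl; apply: sumr_ge0.
Qed.

Lemma LPfeas_chi_eps_le0 x eps :
  (forall p, stpath src dst s t p -> exists e : N, inl e \in p) ->
  (2 <= sigmaN src dst s t)%N -> N_disjoint_family src dst s t (sigmaN src dst s t) ->
  LPfeas src dst s t (chi src dst s t (R:=R)) x eps -> eps <= 0.
Proof.
move=> priv two_le paths [[x_ge0 x_N] feas].
set k := sigmaN src dst s t in two_le x_N paths; case: paths => P [path_P disj_P].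
pose A i := [set e | inl e \in P i].
have A_disj i j : i != j -> [disjoint A i & A j].
  move=> ij; rewrite -setI_eq0 -subset0; apply/subsetP => e.
  by rewrite !inE => /andP[ei ej]; move: (disj_P i j ij _ ei); rewrite ej.
have /fin_all_exists[e_ A_e_] : forall i, exists e, e \in A i.
  by move=> i; have [e ep] := priv _ (path_P i); exists e; rewrite inE.
have other (i : 'I_k) : exists j, j != i.
  have [k0 k1] : (0 < k)%N /\ (1 < k)%N by lia.
  case: (eqVneq i (Ordinal k0)) => [->|ne]; first by exists (Ordinal k1).
  by exists (Ordinal k0); rewrite // eq_sym.
rewrite leNgt; apply/negP => eps_pos.
have x_A i : 1 + eps <= xsum x (A i).
  have [j ji] := other i.
  have ej_Ai : e_ j \notin A i by rewrite (disjointFr (A_disj j i ji) (A_e_ j)).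
  have gamma_Ai : 1 <= (gammat src dst s t (A i))%:R :> R.
    rewrite ler1n /gammat; case: eqP => [Ai_N|_]; first by rewrite Ai_N inE in ej_Ai.
    apply: leq_gamma; last by apply/card_gt0P; exists (inl (e_ i)).
    exists (fun=> P i); split=> [_|j0 j1]; last by rewrite (ord1 j0) (ord1 j1) eqxx.
    by split; last apply/allP => -[e|m] //= ep; rewrite ?inE.
  have k_pos : (0 < k)%N by lia.
  have := feas _ (chi_not_fixed (A_e_ i) ej_Ai k_pos).
  by nra.
have : (1 + eps) *+ k <= k%:R.
  rewrite -x_N -(card_ord k) -sumr_const.
  exact: le_trans (ler_sum _ (fun i _ => x_A i)) (sum_xsum_disjoint_le x_ge0 A_disj).
have k_pos : 0 < k%:R :> R by rewrite ltr0n (leq_trans _ two_le).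
by rewrite -mulr_natr; nra.
Qed.

Lemma LPfeas_chi0_core (x0 x : N -> R) : core src dst s t x0 ->
  LPfeas src dst s t (chi src dst s t (R:=R)) x 0 <-> core src dst s t x.
Proof.
rewrite /LPfeas addr0; move=> [chi_x0 core_x0]; split=> [[chi_x feas]|[chi_x core_x]].
  split=> // S; case: (pselect (fixed (chi src dst s t (R:=R)) S)) => [fixS|/feas].
    by rewrite (fixS x x0).
  by rewrite mul1r.
by split=> // S _; rewrite mul1r.
Qed.

End AuxiliaryGame.

Theorem lemma11 (V N M : finType) (src dst : N + M -> V) (s t : V)
  (R : realType)
  (Hpriv : forall p, stpath src dst s t p -> exists e : N, inl e \in p)
  (Hcover : forall a : N + M, exists p, stpath src dst s t p /\ a \in p)
  (Hsigma : (2 <= sigmaN src dst s t)%N) :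
  LPopt src dst s t (chi src dst s t (R:=R)) 0 /\
  (forall x : N -> R,
      LPnext src dst s t (chi src dst s t (R:=R)) 0 x <-> core src dst s t x).
Proof.
have [C cut_C paths_C] := private_menger (stpath_private_neq Hpriv) Hpriv.
have core_C := indicator_core R cut_C paths_C.
split; last by move=> x; apply: LPfeas_chi0_core core_C.
split; first by exists (indicator R C); apply/(LPfeas_chi0_core _ core_C).
move=> x eps; apply: LPfeas_chi_eps_le0 Hpriv Hsigma _.
by rewrite (sigmaN_cut cut_C paths_C).
Qed.
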